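(* Under Yalcin's semantics, the following formulas are valid for all formulas $\varphi,\alpha,\beta$ of $\mathcal{L}(\Rightarrow)$ and every nonmodal formula $\pi$: A1: $(\varphi\Rightarrow\pi)\leftrightarrow\Box(\varphi\to\pi)$; A2: $(\varphi\Rightarrow(\alpha\wedge\beta))\leftrightarrow((\varphi\Rightarrow\alpha)\wedge(\varphi\Rightarrow\beta))$; A3: $(\varphi\Rightarrow(\alpha\vee\Box\beta))\leftrightarrow((\varphi\Rightarrow\alpha)\vee(\varphi\Rightarrow\beta))$; A4: $(\varphi\Rightarrow(\alpha\vee\Diamond\beta))\leftrightarrow((\varphi\Rightarrow\alpha)\vee\neg(\varphi\Rightarrow\neg\beta))$.
   Context: The language $\mathcal{L}(\Rightarrow)$ is given by $\varphi::= p\mid \neg\varphi\mid (\varphi\wedge\varphi)\mid \Box\varphi \mid (\varphi\Rightarrow\varphi)$, with $p$ ranging over a fixed set of propositional variables; $\vee,\to,\leftrightarrow,\bot$ as usual and $\Diamond\varphi:=\neg\Box\neg\varphi$. A formula is nonmodal if it contains neither $\Rightarrow$ nor $\Box$. A model is $\mathcal{M}=\langle W,V\rangle$ with $W$ nonempty and $V$ assigning each propositional variable a subset of $W$. Yalcin's semantics: for $w\in W$, $X\subseteq W$: $\mathcal{M},w,X\vDash p$ iff $w\in V(p)$; $\neg,\wedge$ Boolean; $\mathcal{M},w,X\vDash\Box\varphi$ iff $\mathcal{M},v,X\vDash\varphi$ for all $v\in X$; $\mathcal{M},w,X\vDash\varphi\Rightarrow\psi$ iff $\mathcal{M},w,\llbracket\varphi\rrbracket^{\mathcal{M},X}\vDash\Box\psi$,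 where $\llbracket\varphi\rrbracket^{\mathcal{M},X}=\{v\in X\mid\mathcal{M},v,X\vDash\varphi\}$. A formula is valid iff it is true at every $w\in W$ relative to every $X\subseteq W$ in every model. *)

Set Implicit Arguments.

Inductive form (A : Type) : Type :=
| Var : A -> form A
| Neg : form A -> form A
| And : form A -> form A -> form A
| Box : form A -> form A
| Cond : form A -> form A -> form A.

Arguments Var {A}. Arguments Neg {A}. Arguments And {A}.
Arguments Box {A}. Arguments Cond {A}.

Definition Or {A} (p q : form A) : form A := Neg (And (Neg p) (Neg q)).
Definition Imp {A} (p q : form A) : form A := Neg (And p (Neg q)).
Definition Iff {A} (p q : form A) : form A := And (Imp p q) (Imp q p).
Definition Dia {A} (p : form A) : form A := Neg (Box (Neg p)).

Fixpoint nonmodal {A} (p : form A) : Prop :=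
  match p with
  | Var _ => True
  | Neg q => nonmodal q
  | And q r => nonmodal q /\ nonmodal r
  | Box _ => False
  | Cond _ _ => False
  end.

(* A model is a set of worlds W (a type) with valuation V; information
   states X are subsets of W (predicates). *)
Fixpoint sat {A} {W : Type} (V : A -> W -> Prop) (w : W) (X : W -> Prop)
  (p : form A) : Prop :=
  match p with
  | Var a => V a w
  | Neg q => ~ sat V w X q
  | And q r => sat V w X q /\ sat V w X r
  | Box q => forall v, X v -> sat V v X q
  | Cond q r =>
      (* M,w,[[q]]^{M,X} |= Box r *)
      let Xq := fun v => X v /\ sat V v X q in
      forall v, Xq v -> sat V v Xq r
  end.

Definition valid {A} (p : form A) : Prop :=
  forall (W : Type) (V : A -> W -> Prop), inhabited W ->
  forall (w : W) (X : W -> Prop), sat V w X p.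

(* Under Yalcin's semantics [phi => psi] holds at [X] exactly when [Box psi]
   holds at the updated state [X_phi], the [phi]-worlds of [X].  A1-A4 are
   therefore properties of [Box] at an arbitrary state.  A nonmodal formula
   ignores the state, so [Box] over [X_phi] unfolds to [Box (phi -> pi)] over
   [X].  [Box] commutes with conjunction, and with a disjunction one of whose
   disjuncts does not depend on the world of evaluation, as is the case for
   [Box beta] and [Dia beta]; at [X_phi] the latter reads [~ (phi => ~ beta)]. *)

From Stdlib Require Import Classical.

Section Semantics.

Variables (A W : Type) (V : A -> W -> Prop).
Implicit Types (p q : form A) (w : W) (X : W -> Prop).

Definition update X p : W -> Prop := fun v => X v /\ sat V v X p.

Lemma sat_Cond w X p q : sat V w X (Cond p q) <-> sat V w (update X p) (Box q).
Proof. reflexivity. Qed.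

Lemma sat_Or w X p q : sat V w X (Or p q) <-> sat V w X p \/ sat V w X q.
Proof. simpl; tauto. Qed.

Lemma sat_Imp w X p q : sat V w X (Imp p q) <-> (sat V w X p -> sat V w X q).
Proof. simpl; tauto. Qed.

Lemma sat_Iff w X p q : sat V w X (Iff p q) <-> (sat V w X p <-> sat V w X q).
Proof. unfold Iff; simpl; tauto. Qed.

Lemma nonmodal_sat_state_indep p w X Y :
  nonmodal p -> sat V w X p <-> sat V w Y p.
Proof. induction p; simpl; tauto. Qed.

Lemma sat_Box_And w X p q :
  sat V w X (Box (And p q)) <-> sat V w X (Box p) /\ sat V w X (Box q).
Proof. simpl; firstorder. Qed.

Lemma sat_Box_Or_world_indep w X p q :
  (forall v, sat V v X q <-> sat V w X q) ->
  sat V w X (Box (Or p q)) <-> sat V w X (Box p) \/ sat V w X q.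
Proof.
  intros Hq; cbn [sat]. split.
  - intros Hpq. destruct (classic (sat V w X q)) as [Hw | Hw]; [now right | left].
    intros v Xv. rewrite <- (Hq v) in Hw. specialize (Hpq v Xv).
    rewrite sat_Or in Hpq; tauto.
  - intros [Hp | Hw] v Xv; rewrite sat_Or, Hq; auto.
Qed.

Lemma sat_Cond_nonmodal w X p q :
  nonmodal q -> sat V w X (Cond p q) <-> sat V w X (Box (Imp p q)).
Proof.
  intros Hq; cbn [sat]. split.
  - intros Hpq v Xv.
    rewrite sat_Imp, (nonmodal_sat_state_indep _ _ _ (update X p) Hq).
    intros Pv. now apply Hpq.
  - intros Hpq v [Xv Pv]. rewrite (nonmodal_sat_state_indep _ _ _ X Hq).
    specialize (Hpq v Xv); rewrite sat_Imp in Hpq; auto.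
Qed.

Lemma sat_Cond_And w X p a b :
  sat V w X (Cond p (And a b)) <-> sat V w X (And (Cond p a) (Cond p b)).
Proof. exact (sat_Box_And w (update X p) a b). Qed.

Lemma sat_Cond_Or_Box w X p a b :
  sat V w X (Cond p (Or a (Box b))) <-> sat V w X (Or (Cond p a) (Cond p b)).
Proof.
  rewrite sat_Or, !sat_Cond. now apply sat_Box_Or_world_indep.
Qed.

Lemma sat_Cond_Or_Dia w X p a b :
  sat V w X (Cond p (Or a (Dia b)))
  <-> sat V w X (Or (Cond p a) (Neg (Cond p (Neg b)))).
Proof.
  rewrite sat_Or, sat_Cond.
  exact (sat_Box_Or_world_indep w (update X p) a (Dia b) (fun v => iff_refl _)).
Qed.

End Semantics.

Lemma valid_Iff (A : Type) (p q : form A) :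
  (forall W (V : A -> W -> Prop) w X, sat V w X p <-> sat V w X q) ->
  valid (Iff p q).
Proof. intros Hpq W V _ w X. now apply sat_Iff. Qed.

Theorem lemma3 (A : Type) (phi alpha beta pi : form A) :
  (nonmodal pi -> valid (Iff (Cond phi pi) (Box (Imp phi pi)))) /\
  valid (Iff (Cond phi (And alpha beta)) (And (Cond phi alpha) (Cond phi beta))) /\
  valid (Iff (Cond phi (Or alpha (Box beta))) (Or (Cond phi alpha) (Cond phi beta))) /\
  valid (Iff (Cond phi (Or alpha (Dia beta)))
             (Or (Cond phi alpha) (Neg (Cond phi (Neg beta))))).
Proof.
  split; [| split; [| split]]; [intros Hpi |..]; apply valid_Iff; intros W V w X.
  - now apply sat_Cond_nonmodal.
  - apply sat_Cond_And.
  - apply sat_Cond_Or_Box.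
  - apply sat_Cond_Or_Dia.
Qed.
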